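(* Assume $\mathcal M$ satisfies extensibility. Let $\lambda\in\mathbb R^A$ with $\lambda>0$ such that $LP(\lambda)$ is feasible, and partition $A$ by equality of $\lambda_i$ into $S_1,\dots,S_d$ with $\lambda(S_1)<\dots<\lambda(S_d)$; set $T_g=\bigcup_{q=g}^dS_q$. (1) Every optimal solution $X$ of $LP(\lambda)$ is jointly optimal for $T_g$ for every $g\in[d]$, and for any two optimal solutions $X,Y$ of $LP(\lambda)$, $\mathrm{delay}_{S_g}(X)=\mathrm{delay}_{S_g}(Y)$ for all $g\in[d]$. (2) If $(\alpha,p)$ and $(\alpha',p')$ are optimal solutions of $DLP(\lambda)$ and, for some $g\in[d]$, $\sum_{i\in S_g,k}r_{ik}\alpha_{ik}=\sum_{i\in S_g,k}r_{ik}\alpha'_{ik}$, then $\mathrm{pay}_{S_g}(X,p)=\mathrm{pay}_{S_g}(X,p')$ for every optimal solution $X$ of $LP(\lambda)$. (3) If $X,X'$ are optimal solutions of $LP(\lambda)$, $(\alpha,p)$ is an optimal solution of $DLP(\lambda)$, $g\in[d]$ and $S\subseteq S_g$, then $\mathrm{delay}_S(X)\le\mathrm{delay}_S(X')$ implies $\mathrm{pay}_S(X,p)\ge\mathrm{pay}_S(X',p)$, and the first inequality is strict iff the second is strict.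
   Context: A market $\mathcal M$: finite agent set $A$, finite goods set $G$ (each of supply $1$), finite index set $C$; agent $i$ has real coefficients $a_{ijk}$, requirements $r_{ik}\ge0$, delays $d_{ij}\ge0$, budget $m_i>0$. CC$(i)$: $\sum_ja_{ijk}x_{ij}\ge r_{ik}$ for all $k$, $x_{ij}\ge0$. An allocation $X=(x_{ij})\ge0$ is supply respecting if $\sum_ix_{ij}\le1$ for all $j$. For $S\subseteq A$, $X$ is jointly optimal for $S$ if it satisfies CC$(i)$ for all $i\in S$, is supply respecting, and minimizes $\sum_{i\in S}\sum_jd_{ij}x_{ij}$ among allocations with these two properties. $\mathcal M$ satisfies extensibility if for every $S\subset A$, every $X$ jointly optimal for $S$, and every $i\in A\setminus S$, there is $X'$ jointly optimal for $S\cup\{i\}$ with $\sum_jd_{i'j}x'_{i'j}=\sum_jd_{i'j}x_{i'j}$ for all $i'\in S$. $LP(\lambda)$: minimize $\sum_i\lambda_i\sum_jd_{ij}x_{ij}$ s.t. $\sum_ja_{ijk}x_{ij}\ge r_{ik}$ for all $(i,k)$, $\sum_ix_{ij}\le1$ for all $j$, $x\ge0$. $DLP(\lambda)$: maximize $\sum_{i,k}r_{ik}\alpha_{ik}-\sum_jp_j$ s.t. $\lambda_id_{ij}\ge\sum_ka_{ijk}\alpha_{ik}-p_j$ for all $(i,j)$, $\alpha\ge0$, $p\ge0$. Notation: $\mathrm{delay}_S(X)=\sum_{i\in S}\sum_jd_{ij}x_{ij}$, $\mathrm{pay}_S(X,p)=\sum_{i\in S}\sum_jp_jx_{ij}$;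 $\lambda(S)$ denotes the common value of $\lambda_i$ for $i\in S$; $[d]=\{1,\dots,d\}$. *)

From HB Require Import structures.
From mathcomp Require Import all_boot all_order all_algebra.
Set Implicit Arguments. Unset Strict Implicit. Unset Printing Implicit Defensive.
Import Order.TTheory GRing.Theory Num.Theory.
Local Open Scope ring_scope.

Section Market.
Variables (R : realFieldType) (A G C : finType).
Variables (a : A -> G -> C -> R) (r : A -> C -> R) (d : A -> G -> R).

Definition alloc := A -> G -> R.

Definition CC (i : A) (X : alloc) : Prop :=
  forall k : C, r i k <= \sum_(j : G) a i j k * X i j.

Definition nonneg_alloc (X : alloc) : Prop := forall i j, 0 <= X i j.

Definition supply_respecting (X : alloc) : Prop :=
  nonneg_alloc X /\ forall j : G, \sum_(i : A) X i j <= 1.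

Definition agent_delay (i : A) (X : alloc) : R := \sum_(j : G) d i j * X i j.

Definition delay (S : {set A}) (X : alloc) : R := \sum_(i in S) agent_delay i X.

Definition pay (S : {set A}) (X : alloc) (p : G -> R) : R :=
  \sum_(i in S) \sum_(j : G) p j * X i j.

Definition jointly_optimal (S : {set A}) (X : alloc) : Prop :=
  [/\ supply_respecting X, (forall i, i \in S -> CC i X) &
      forall Y : alloc, supply_respecting Y -> (forall i, i \in S -> CC i Y) ->
        delay S X <= delay S Y].

Definition extensibility : Prop :=
  forall (S : {set A}) (X : alloc), jointly_optimal S X ->
  forall i : A, i \notin S ->
  exists X' : alloc, jointly_optimal (i |: S) X' /\
    forall i', i' \in S -> agent_delay i' X' = agent_delay i' X.

Definition LP_feasible_sol (X : alloc) : Prop :=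
  supply_respecting X /\ forall i, CC i X.

Definition LP_obj (lam : A -> R) (X : alloc) : R :=
  \sum_(i : A) lam i * agent_delay i X.

Definition LP_feasible : Prop := exists X, LP_feasible_sol X.

Definition LP_optimal (lam : A -> R) (X : alloc) : Prop :=
  LP_feasible_sol X /\
  forall Y, LP_feasible_sol Y -> LP_obj lam X <= LP_obj lam Y.

Definition DLP_feasible_sol (lam : A -> R) (alpha : A -> C -> R) (p : G -> R) : Prop :=
  [/\ forall i k, 0 <= alpha i k, forall j, 0 <= p j &
      forall i j, \sum_(k : C) a i j k * alpha i k - p j <= lam i * d i j].

Definition DLP_obj (alpha : A -> C -> R) (p : G -> R) : R :=
  \sum_(i : A) \sum_(k : C) r i k * alpha i k - \sum_(j : G) p j.

Definition DLP_optimal (lam : A -> R) (alpha : A -> C -> R) (p : G -> R) : Prop :=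
  DLP_feasible_sol lam alpha p /\
  forall alpha' p', DLP_feasible_sol lam alpha' p' ->
    DLP_obj alpha' p' <= DLP_obj alpha p.

End Market.

(* The classes S_g of the partition of A by equality of lambda_i:
   S_g = level lam i0 for any i0 in S_g; T_g = upper lam i0 = union of the
   classes whose lambda value is >= lambda(S_g). *)
Definition level (R : realFieldType) (A : finType) (lam : A -> R) (i0 : A) : {set A} :=
  [set i | lam i == lam i0].
Definition upper (R : realFieldType) (A : finType) (lam : A -> R) (i0 : A) : {set A} :=
  [set i | lam i0 <= lam i].

(* Extensibility, applied while adding the agents in order of decreasing
   [lam], yields one allocation [Z] that is jointly optimal for every upper set
   T_g at once.  For an optimal solution [X] of LP(lam), the differences
   delay_i(X) - delay_i(Z) have nonnegative sums over every T_g, so by Abel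
   summation their [lam]-weighted sum, the objective gap between [X] and [Z],
   is a positive combination of these sums.  Being also nonpositive, it
   forces all of them to vanish: [X] is jointly optimal for every T_g, and the
   delays on S_g = T_g \ T_(g+1) do not depend on [X].  Parts (2) and (3) then
   follow from complementary slackness,
     pay_i(X, p) = sum_k r_ik alpha_ik - lam_i delay_i(X),
   which rests on strong LP duality, proved here from Farkas' lemma by
   Fourier-Motzkin elimination. *)

From HB Require Import structures.
From mathcomp Require Import all_boot all_order all_algebra.
From mathcomp Require Import ring lra zify.
From Stdlib Require List.
Set Implicit Arguments. Unset Strict Implicit. Unset Printing Implicit Defensive.
Import Order.TTheory GRing.Theory Num.Theory.
Local Open Scope ring_scope.

Lemma In_of_mem (X : eqType) (x : X) (s : seq X) : x \in s -> List.In x s.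
Proof. by elim: s => //= y s IH; rewrite in_cons => /orP [/eqP ->|/IH]; auto. Qed.

Lemma In_image (X : finType) (Y : Type) (F : X -> Y) (x : X) :
  List.In (F x) [seq F y | y : X].
Proof. by apply: List.in_map; apply: In_of_mem; rewrite mem_enum. Qed.

Lemma In_imageP (X : finType) (Y : Type) (F : X -> Y) (f : Y) :
  List.In f [seq F y | y : X] -> exists x, f = F x.
Proof. by case/List.in_map_iff=> x [<- _]; exists x. Qed.
Arguments In_imageP {X Y} F {f}.

Section FourierMotzkin.
Variables (R : realFieldType) (T : finType).

Definition affine := ((T -> R) * R)%type.

Definition aeval (f : affine) (x : T -> R) : R := \sum_t f.1 t * x t + f.2.

Definition satisfies (s : seq affine) (x : T -> R) :=
  forall f, List.In f s -> 0 <= aeval f x.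

Definition comb (c1 : R) (f : affine) (c2 : R) (g : affine) : affine :=
  (fun t => c1 * f.1 t + c2 * g.1 t, c1 * f.2 + c2 * g.2).

Inductive cone (s : seq affine) : affine -> Prop :=
| cone_mem f : List.In f s -> cone s f
| cone_comb c1 f c2 g : 0 <= c1 -> 0 <= c2 -> cone s f -> cone s g ->
    cone s (comb c1 f c2 g).

Lemma aeval_comb c1 f c2 g x :
  aeval (comb c1 f c2 g) x = c1 * aeval f x + c2 * aeval g x.
Proof.
rewrite /aeval /= (eq_bigr (fun t => c1 * (f.1 t * x t) + c2 * (g.1 t * x t)));
  last by move=> t _; ring.
by rewrite big_split /= -!mulr_sumr; ring.
Qed.

Lemma cone_trans s s' f :
  (forall g, List.In g s' -> cone s g) -> cone s' f -> cone s f.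
Proof. by move=> sub; elim=> [g /sub //|c1 g c2 h c1_ge0 c2_ge0 _ + _]; exact: cone_comb. Qed.

Definition update (x : T -> R) (m : T) (y : R) : T -> R :=
  fun t => if t == m then y else x t.

Lemma aeval_update f x m y :
  aeval f (update x m y) = aeval f x + f.1 m * (y - x m).
Proof.
rewrite /aeval [X in X + _ = _](bigD1 m) // [X in _ = X + _ + _](bigD1 m) //=.
rewrite /update eqxx (eq_bigr (fun t => f.1 t * x t)) => [|t /negbTE -> //].
ring.
Qed.

Definition supported_on (s : seq affine) (V : {set T}) :=
  forall f, List.In f s -> forall t, t \notin V -> f.1 t = 0.

Definition eliminate (s : seq affine) (m : T) : seq affine :=
  List.filter (fun f => f.1 m == 0) s ++
  List.flat_map (fun f => List.map (fun g => comb (- g.1 m) f (f.1 m) g)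
     (List.filter (fun g => g.1 m < 0) s)) (List.filter (fun f => 0 < f.1 m) s).

Lemma In_eliminate h s m : List.In h (eliminate s m) ->
  (List.In h s /\ h.1 m = 0) \/
  exists f g, [/\ List.In f s, List.In g s, 0 < f.1 m, g.1 m < 0 &
                  h = comb (- g.1 m) f (f.1 m) g].
Proof.
rewrite /eliminate List.in_app_iff List.filter_In List.in_flat_map.
case=> [[s_h /eqP h_m]|[f [/List.filter_In [s_f f_m]]]]; first by left.
by case/List.in_map_iff=> g [<- /List.filter_In [s_g g_m]]; right; exists f, g.
Qed.

Lemma eliminate_zero f s m :
  List.In f s -> f.1 m = 0 -> List.In f (eliminate s m).
Proof.
by move=> s_f f_m; rewrite List.in_app_iff; left; apply/List.filter_In; rewrite f_m eqxx.
Qed.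

Lemma eliminate_pair f g s m : List.In f s -> List.In g s -> 0 < f.1 m -> g.1 m < 0 ->
  List.In (comb (- g.1 m) f (f.1 m) g) (eliminate s m).
Proof.
move=> s_f s_g f_m g_m; rewrite List.in_app_iff; right.
apply/List.in_flat_map; exists f; split; first exact/List.filter_In.
by apply/List.in_map_iff; exists g; split=> //; apply/List.filter_In.
Qed.

Lemma eliminate_cone s m f : cone (eliminate s m) f -> cone s f.
Proof.
apply: cone_trans => h /In_eliminate [[s_h _]|[f' [g [s_f s_g f_m g_m ->]]]].
  exact: cone_mem.
by apply: cone_comb; rewrite ?oppr_ge0 ?ltW //; exact: cone_mem.
Qed.

Lemma eliminate_supported s m V :
  supported_on s V -> supported_on (eliminate s m) (V :\ m).
Proof.
move=> supp h /In_eliminate [[s_h h_m]|[f [g [s_f s_g _ _ ->]]]] t;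
  rewrite in_setD1 negb_and negbK => /orP [/eqP ->|t_V] //=.
- exact: supp.
- by ring.
- by rewrite (supp f s_f t t_V) (supp g s_g t t_V); ring.
Qed.

Lemma exists_between (X : Type) (P N : seq X) (L U : X -> R) :
  (forall f g, List.In f P -> List.In g N -> L f <= U g) ->
  exists y, (forall f, List.In f P -> L f <= y) /\ (forall g, List.In g N -> y <= U g).
Proof.
elim: P => [|f P IH] LU.
  elim: N {LU} => [|g N [y [_ y_N]]]; first by exists 0.
  exists (Num.min (U g) y); split=> // h /= [<-|/y_N]; first by rewrite ge_min lexx.
  by move=> y_h; rewrite ge_min y_h orbT.
have [y [P_y y_N]] : exists y, (forall f, List.In f P -> L f <= y) /\
    (forall g, List.In g N -> y <= U g).
  by apply: IH => f' g P_f N_g; apply: LU => //; right.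
exists (Num.max y (L f)); split.
  by move=> f' /= [<-|/P_y le_f]; rewrite le_max ?lexx ?orbT ?le_f.
by move=> g N_g; rewrite ge_max y_N //=; apply: LU => //; left.
Qed.

(* The rows with a positive (negative) coefficient at [m] give lower (upper)
   bounds on the value of [m]; the combined rows say that each lower bound is
   below each upper bound. *)
Lemma eliminate_satisfies s m x :
  satisfies (eliminate s m) x -> exists y, satisfies s (update x m y).
Proof.
move=> sat_x; pose B (h : affine) := x m - aeval h x / h.1 m.
have [y [lo_y hi_y]] : exists y,
    (forall f, List.In f (List.filter (fun f : affine => 0 < f.1 m) s) -> B f <= y) /\
    (forall g, List.In g (List.filter (fun g : affine => g.1 m < 0) s) -> y <= B g).
  apply: exists_between => f g /List.filter_In [s_f f_m] /List.filter_In [s_g g_m].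
  have := sat_x _ (eliminate_pair s_f s_g f_m g_m); rewrite aeval_comb => comb_ge0.
  rewrite -subr_ge0.
  have -> : B g - B f = (- g.1 m * aeval f x + f.1 m * aeval g x) / (f.1 m * - g.1 m).
    by rewrite /B; field; rewrite (ltr0_neq0 g_m) (lt0r_neq0 f_m).
  by apply: divr_ge0 => //; apply: mulr_ge0; rewrite ?oppr_ge0 ltW.
exists y => f s_f; rewrite aeval_update.
case: (ltgtP (f.1 m) 0) => f_m.
- have -> : aeval f x + f.1 m * (y - x m) = f.1 m * (y - B f).
    by rewrite /B; field; rewrite ltr0_neq0.
  apply: mulr_le0; first exact: ltW.
  by rewrite subr_le0 hi_y //; apply/List.filter_In.
- have -> : aeval f x + f.1 m * (y - x m) = f.1 m * (y - B f).
    by rewrite /B; field; rewrite lt0r_neq0.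
  apply: mulr_ge0; first exact: ltW.
  by rewrite subr_ge0 lo_y //; apply/List.filter_In.
- by rewrite f_m mul0r addr0; apply: sat_x; apply: eliminate_zero.
Qed.

Lemma unsat_constant s : (forall f, List.In f s -> forall t, f.1 t = 0) ->
  (forall x, ~ satisfies s x) -> exists2 f, List.In f s & f.2 < 0.
Proof.
move=> const unsat; case neg: (List.existsb (fun f : affine => f.2 < 0) s).
  by case/List.existsb_exists: neg => f [s_f f_neg]; exists f.
exfalso; apply: (unsat (fun _ => 0)) => f s_f.
rewrite /aeval big1 ?add0r => [|t _]; last by rewrite mulr0.
rewrite leNgt; apply: contraFN neg => f_neg.
by apply/List.existsb_exists; exists f.
Qed.

Lemma farkas_supported n (V : {set T}) s : #|V| = n -> supported_on s V ->
  (forall x, ~ satisfies s x) -> exists2 f, cone s f & (forall t, f.1 t = 0) /\ f.2 < 0.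
Proof.
elim: n V s => [|n IH] V s card_V supp unsat.
  have V0 : V = set0 by apply/eqP; rewrite -cards_eq0 card_V.
  have const f : List.In f s -> forall t, f.1 t = 0.
    by move=> s_f t; apply: supp; rewrite // V0 in_set0.
  have [f s_f f_neg] := unsat_constant const unsat.
  by exists f; [exact: cone_mem | split=> //; exact: const].
have /set0Pn [m V_m] : V != set0 by rewrite -card_gt0 card_V.
have card_Vm : #|V :\ m| = n by move: card_V; rewrite (cardsD1 m V) V_m add1n => -[].
have unsat_m x : ~ satisfies (eliminate s m) x.
  by case/eliminate_satisfies=> y; apply: unsat.
have [f /eliminate_cone] := IH _ _ card_Vm (eliminate_supported (m := m) supp) unsat_m.
by exists f.
Qed.

Lemma farkas s : (forall x, ~ satisfies s x) ->
  exists2 f, cone s f & (forall t, f.1 t = 0) /\ f.2 < 0.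
Proof. by apply: (farkas_supported (V := [set: T])) => // f _ t; rewrite in_setT. Qed.

End FourierMotzkin.

Section Duality.
Variables (R : realFieldType) (A G C : finType).
Variables (a : A -> G -> C -> R) (r : A -> C -> R) (d : A -> G -> R) (lam : A -> R).
Implicit Types (X : alloc R A G) (al : A -> C -> R) (p : G -> R).

Definition cc_slack X al i := \sum_k al i k * (\sum_j a i j k * X i j - r i k).

Definition price_slack X al p mu i :=
  \sum_j X i j * (mu * (lam i * d i j) - (\sum_k a i j k * al i k - p j)).

Definition supply_slack X p := \sum_j p j * (1 - \sum_i X i j).

Lemma agent_gap X al p mu i : cc_slack X al i + price_slack X al p mu i =
  mu * (lam i * agent_delay d i X) - \sum_k r i k * al i k + \sum_j p j * X i j.
Proof.
have -> : cc_slack X al i =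
    \sum_j X i j * (\sum_k a i j k * al i k) - \sum_k r i k * al i k.
  rewrite /cc_slack (eq_bigr (fun k => \sum_j al i k * a i j k * X i j - r i k * al i k)).
    rewrite sumrB exchange_big /=; congr (_ - _); apply: eq_bigr => j _.
    by rewrite mulr_sumr; apply: eq_bigr => k _; ring.
  move=> k _; rewrite mulrBr mulr_sumr.
  by congr (_ - _); [apply: eq_bigr => j _; ring | ring].
have -> : price_slack X al p mu i = mu * (lam i * agent_delay d i X)
    - \sum_j X i j * (\sum_k a i j k * al i k) + \sum_j p j * X i j.
  rewrite /price_slack /agent_delay (eq_bigr (fun j => (mu * lam i) * (d i j * X i j)
     - X i j * (\sum_k a i j k * al i k) + p j * X i j)); last by move=> j _; ring.
  by rewrite big_split sumrB /= -(mulr_sumr _ _ _ (mu * lam i)); ring.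
ring.
Qed.

Lemma duality_gap X al p mu : mu * LP_obj d lam X - DLP_obj r al p =
  \sum_i cc_slack X al i + \sum_i price_slack X al p mu i + supply_slack X p.
Proof.
rewrite -big_split /= (eq_bigr (fun i => mu * (lam i * agent_delay d i X)
   - \sum_k r i k * al i k + \sum_j p j * X i j)); last by move=> i _; rewrite agent_gap.
rewrite big_split sumrB /= -(mulr_sumr _ _ _ mu) /supply_slack.
rewrite (eq_bigr (fun j => p j - \sum_i p j * X i j)); last first.
  by move=> j _; rewrite mulrBr mulr1 mulr_sumr.
rewrite sumrB (exchange_big _ _ _ _ _ (fun i j => p j * X i j)) /= /DLP_obj /LP_obj; ring.
Qed.

Lemma cc_slack_ge0 X al i :
  (forall k, 0 <= al i k) -> CC a r i X -> 0 <= cc_slack X al i.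
Proof. by move=> al_ge0 cc; apply: sumr_ge0 => k _; rewrite mulr_ge0 ?subr_ge0. Qed.

Lemma price_slack_ge0 X al p mu i : (forall j, 0 <= X i j) ->
  (forall j, \sum_k a i j k * al i k - p j <= mu * (lam i * d i j)) ->
  0 <= price_slack X al p mu i.
Proof. by move=> X_ge0 dual; apply: sumr_ge0 => j _; rewrite mulr_ge0 ?subr_ge0. Qed.

Lemma supply_slack_ge0 X p : (forall j, 0 <= p j) -> (forall j, \sum_i X i j <= 1) ->
  0 <= supply_slack X p.
Proof. by move=> p_ge0 sup; apply: sumr_ge0 => j _; rewrite mulr_ge0 ?subr_ge0. Qed.

(* [mu] is the weight a Farkas certificate puts on the objective row. *)
Lemma weak_duality_scaled X al p mu : LP_feasible_sol a r X ->
  (forall i k, 0 <= al i k) -> (forall j, 0 <= p j) ->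
  (forall i j, \sum_k a i j k * al i k - p j <= mu * (lam i * d i j)) ->
  DLP_obj r al p <= mu * LP_obj d lam X.
Proof.
move=> [[X_ge0 sup] cc] al_ge0 p_ge0 dual; rewrite -subr_ge0 duality_gap.
rewrite !addr_ge0 ?supply_slack_ge0 //.
  by apply: sumr_ge0 => i _; apply: cc_slack_ge0.
by apply: sumr_ge0 => i _; apply: price_slack_ge0.
Qed.

Lemma DLP_objD al1 p1 al2 p2 :
  DLP_obj r (fun i k => al1 i k + al2 i k) (fun j => p1 j + p2 j) =
  DLP_obj r al1 p1 + DLP_obj r al2 p2.
Proof.
rewrite /DLP_obj (eq_bigr (fun i => \sum_k r i k * al1 i k + \sum_k r i k * al2 i k)).
  by rewrite !big_split /=; ring.
by move=> i _; rewrite -big_split; apply: eq_bigr => k _; rewrite mulrDr.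
Qed.

Lemma DLP_objZ c al p :
  DLP_obj r (fun i k => c * al i k) (fun j => c * p j) = c * DLP_obj r al p.
Proof.
rewrite /DLP_obj mulrBr !mulr_sumr; congr (_ - _).
by apply: eq_bigr => i _; rewrite mulr_sumr; apply: eq_bigr => k _; ring.
Qed.

End Duality.

Lemma sum_pair (V : nmodType) (X Y : finType) (F : X * Y -> V) :
  \sum_t F t = \sum_x \sum_y F (x, y).
Proof. by rewrite pair_big; apply: eq_big => // -[]. Qed.

Lemma sum_delta (R : pzSemiRingType) (X : finType) (y : X) (F : X -> R) :
  \sum_x F x * (if x == y then 1 else 0) = F y.
Proof. by rewrite (bigD1 y) //= eqxx mulr1 big1 ?addr0 // => x /negbTE ->; rewrite mulr0. Qed.

Section StrongDuality.
Variables (R : realFieldType) (A G C : finType).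
Variables (a : A -> G -> C -> R) (r : A -> C -> R) (d : A -> G -> R) (lam : A -> R).
Local Notation T := (A * G)%type.

Definition valloc (x : T -> R) : alloc R A G := fun i j => x (i, j).

Definition cc_row i k : affine R T :=
  (fun t => if t.1 == i then a i t.2 k else 0, - r i k).
Definition supply_row j : affine R T := (fun t => if t.2 == j then -1 else 0, 1).
Definition nonneg_row t0 : affine R T := (fun t => if t == t0 then 1 else 0, 0).
Definition objective_row v : affine R T := (fun t => - (lam t.1 * d t.1 t.2), v).

Definition lp_system v : seq (affine R T) :=
  objective_row v :: [seq cc_row ik.1 ik.2 | ik : A * C] ++
  [seq supply_row j | j : G] ++ [seq nonneg_row t | t : T].

Lemma aeval_cc_row i k x : aeval (cc_row i k) x = \sum_j a i j k * x (i, j) - r i k.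
Proof.
rewrite /aeval /= sum_pair (bigD1 i) //= eqxx [X in _ + X + _]big1 ?addr0 //.
by move=> i' /negbTE ne; apply: big1 => j _; rewrite /= ne mul0r.
Qed.

Lemma aeval_supply_row j x : aeval (supply_row j) x = 1 - \sum_i x (i, j).
Proof.
rewrite /aeval /= sum_pair addrC -sumrN; congr (_ + _); apply: eq_bigr => i _.
rewrite (bigD1 j) //= eqxx [X in _ + X]big1 ?addr0 ?mulN1r //.
by move=> j' /negbTE ne; rewrite /= ne mul0r.
Qed.

Lemma aeval_nonneg_row t0 x : aeval (nonneg_row t0) x = x t0.
Proof.
rewrite /aeval /= addr0 -(sum_delta t0 x); apply: eq_bigr => t _; exact: mulrC.
Qed.

Lemma aeval_objective_row v x : aeval (objective_row v) x = v - LP_obj d lam (valloc x).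
Proof.
rewrite /aeval /= sum_pair addrC -sumrN; congr (_ + _); apply: eq_bigr => i _.
by rewrite /agent_delay mulr_sumr -sumrN; apply: eq_bigr => j _; rewrite /valloc; ring.
Qed.

Lemma lp_system_sat v x : satisfies (lp_system v) x ->
  LP_feasible_sol a r (valloc x) /\ LP_obj d lam (valloc x) <= v.
Proof.
move=> sat_x; have row_ge0 f : List.In f (lp_system v) -> 0 <= aeval f x by apply: sat_x.
split; first split; first split.
- move=> i j; rewrite /valloc -aeval_nonneg_row; apply: row_ge0.
  by rewrite /= !List.in_app_iff; do 3 right; exact: In_image.
- move=> j; rewrite -subr_ge0 -aeval_supply_row; apply: row_ge0.
  by rewrite /= !List.in_app_iff; do 2 right; left; exact: In_image.
- move=> i k; rewrite -subr_ge0 -aeval_cc_row; apply: row_ge0.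
  rewrite /= !List.in_app_iff; right; left.
  exact: (In_image (fun ik => cc_row ik.1 ik.2) (i, k)).
- by rewrite -subr_ge0 -aeval_objective_row; apply: row_ge0; left.
Qed.

(* The shape of every nonnegative combination of rows of [lp_system v]:
   [mu] is the weight of the objective row, [al] and [p] those of the
   requirement and supply rows, and the nonnegativity rows only add slack. *)
Definition dual_form v (f : affine R T) := exists al p mu,
  [/\ (forall i k, 0 <= al i k) /\ (forall j, 0 <= p j), 0 <= mu,
      forall i j, \sum_k a i j k * al i k - p j - mu * (lam i * d i j) <= f.1 (i, j) &
      f.2 = mu * v - DLP_obj r al p].

Lemma DLP_obj0 : DLP_obj r (fun _ _ => 0) (fun _ : G => 0) = 0.
Proof. by rewrite /DLP_obj !big1 ?subr0 // => i _; rewrite big1 // => k _; rewrite mulr0. Qed.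

Lemma dual_form_objective_row v : dual_form v (objective_row v).
Proof.
exists (fun _ _ => 0), (fun _ => 0), 1; split=> //= [i j|]; last by rewrite DLP_obj0; ring.
by rewrite big1 => [|k _]; rewrite ?mulr0 //; lra.
Qed.

Lemma dual_form_cc_row v i k : dual_form v (cc_row i k).
Proof.
exists (fun i' k' => if (i', k') == (i, k) then 1 else 0), (fun _ => 0), 0.
split=> //=.
- by split=> // i' k'; case: ifP; rewrite ?ler01.
- move=> i' j; rewrite subr0 mul0r subr0; case: eqP => [->|/eqP ne].
    rewrite (eq_bigr (fun k' => a i j k' * (if k' == k then 1 else 0))) ?sum_delta //.
    by move=> k' _; rewrite xpair_eqE eqxx.
  by rewrite big1 // => k' _; rewrite xpair_eqE (negbTE ne) mulr0.
- rewrite /DLP_obj -(sum_pair (fun t => r t.1 t.2 * (if t == (i, k) then 1 else 0))).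
  by rewrite sum_delta big1 //; ring.
Qed.

Lemma dual_form_supply_row v j : dual_form v (supply_row j).
Proof.
exists (fun _ _ => 0), (fun j' => if j' == j then 1 else 0), 0; split=> //=.
- by split=> // j'; case: ifP; rewrite ?ler01.
- move=> i j'; rewrite big1 => [|k _]; last by rewrite mulr0.
  by case: ifP; rewrite ?subr0 //; lra.
- rewrite /DLP_obj (eq_bigr (fun j' => if j' == j then 1 else 0)) => [|j' _ //].
  rewrite -big_mkcond /= big_pred1_eq big1 => [|i _]; first by ring.
  by rewrite big1 // => k _; rewrite mulr0.
Qed.

Lemma dual_form_nonneg_row v t : dual_form v (nonneg_row t).
Proof.
exists (fun _ _ => 0), (fun _ => 0), 0; split=> //= [i j|]; last by rewrite DLP_obj0; ring.
rewrite big1 => [|k _]; last by rewrite mulr0.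
by rewrite mul0r !subr0; case: ifP; rewrite ?ler01.
Qed.

Lemma dual_form_row v f : List.In f (lp_system v) -> dual_form v f.
Proof.
rewrite /= !List.in_app_iff => -[<-|[|[]]]; first exact: dual_form_objective_row.
- by case/(In_imageP (fun ik : A * C => cc_row ik.1 ik.2))=> -[i k] ->;
    exact: dual_form_cc_row.
- by case/(In_imageP supply_row)=> j ->; exact: dual_form_supply_row.
- by case/(In_imageP nonneg_row)=> t ->; exact: dual_form_nonneg_row.
Qed.

Lemma dual_form_comb v c1 f c2 g : 0 <= c1 -> 0 <= c2 ->
  dual_form v f -> dual_form v g -> dual_form v (comb c1 f c2 g).
Proof.
move=> c1_ge0 c2_ge0 [al1 [p1 [mu1 [[al1_ge0 p1_ge0] mu1_ge0 f1 f2]]]]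
  [al2 [p2 [mu2 [[al2_ge0 p2_ge0] mu2_ge0 g1 g2]]]].
exists (fun i k => c1 * al1 i k + c2 * al2 i k), (fun j => c1 * p1 j + c2 * p2 j),
  (c1 * mu1 + c2 * mu2); split=> /=.
- by split=> *; rewrite addr_ge0 ?mulr_ge0.
- by rewrite addr_ge0 ?mulr_ge0.
- move=> i j; rewrite (eq_bigr (fun k => c1 * (a i j k * al1 i k) + c2 * (a i j k * al2 i k)));
    last by move=> k _; ring.
  have := ler_wpM2l c1_ge0 (f1 i j); have := ler_wpM2l c2_ge0 (g1 i j).
  rewrite big_split /= -!mulr_sumr; lra.
- by rewrite f2 g2 DLP_objD !DLP_objZ; ring.
Qed.

Lemma cone_dual_form v f : cone (lp_system v) f -> dual_form v f.
Proof.
elim=> [g /dual_form_row //|c1 g c2 h c1_ge0 c2_ge0 _ + _]; exact: dual_form_comb.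
Qed.

Lemma DLP_feasible_scale mu al p : 0 < mu ->
  (forall i k, 0 <= al i k) -> (forall j, 0 <= p j) ->
  (forall i j, \sum_k a i j k * al i k - p j <= mu * (lam i * d i j)) ->
  DLP_feasible_sol a d lam (fun i k => mu^-1 * al i k) (fun j => mu^-1 * p j).
Proof.
move=> mu_gt0 al_ge0 p_ge0 dual; have inv_ge0 : 0 <= mu^-1 by rewrite invr_ge0 ltW.
split=> [i k | j | i j]; try exact: mulr_ge0.
rewrite (eq_bigr (fun k => mu^-1 * (a i j k * al i k))) => [|k _]; last by ring.
by rewrite -mulr_sumr -mulrBr mulrC ler_pdivrMr // mulrC.
Qed.

(* If [D := DLP_obj r al p] were below the optimum of LP(lam), the system
   [lp_system D] would be infeasible, and its Farkas certificate rescaled by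
   the weight of the objective row is a dual solution better than [(al, p)]. *)
Lemma strong_duality X al p : LP_optimal a r d lam X -> DLP_optimal a r d lam al p ->
  DLP_obj r al p = LP_obj d lam X.
Proof.
move=> [X_feas X_opt] [[al_ge0 p_ge0 dual] dual_opt].
have weak : DLP_obj r al p <= LP_obj d lam X.
  rewrite -[LP_obj _ _ _]mul1r; apply: (weak_duality_scaled X_feas) => // i j.
  by rewrite mul1r.
apply/eqP; rewrite eq_le weak /= leNgt; apply/negP => gap.
set D := DLP_obj r al p in gap.
have unsat x : ~ satisfies (lp_system D) x.
  case/lp_system_sat=> x_feas x_le.
  by have := le_lt_trans (le_trans (X_opt _ x_feas) x_le) gap; rewrite ltxx.
have [f /cone_dual_form [al' [p' [mu [[al'_ge0 p'_ge0] mu_ge0 f1 f2]]]] [f1_0 f2_lt0]] :=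
  farkas unsat.
have dual' i j : \sum_k a i j k * al' i k - p' j <= mu * (lam i * d i j).
  by have := f1 i j; rewrite f1_0; lra.
have D_lt : mu * D < DLP_obj r al' p' by move: f2_lt0; rewrite f2; lra.
have weak' := weak_duality_scaled X_feas al'_ge0 p'_ge0 dual'.
have mu_gt0 : 0 < mu.
  rewrite lt0r mu_ge0 andbT; apply/eqP => mu0.
  by have := lt_le_trans D_lt weak'; rewrite mu0 !mul0r ltxx.
have feas := DLP_feasible_scale mu_gt0 al'_ge0 p'_ge0 dual'.
have := dual_opt _ _ feas; rewrite DLP_objZ mulrC ler_pdivrMr // mulrC.
by move=> /(lt_le_trans D_lt); rewrite ltxx.
Qed.

Lemma complementary_slackness X al p i :
  LP_optimal a r d lam X -> DLP_optimal a r d lam al p ->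
  \sum_j p j * X i j = \sum_k r i k * al i k - lam i * agent_delay d i X.
Proof.
move=> X_opt al_opt; have gap0 := strong_duality X_opt al_opt.
case: X_opt => [[[X_ge0 sup] cc] _]; case: al_opt => [[al_ge0 p_ge0 dual] _].
have cc_ge0 i' : 0 <= cc_slack a r X al i' by apply: cc_slack_ge0.
have price_ge0 i' : 0 <= price_slack a d lam X al p 1 i'.
  by apply: price_slack_ge0 => // j; rewrite mul1r.
have := duality_gap a r d lam X al p 1; rewrite mul1r gap0 subrr => gap.
have supply_ge0 := supply_slack_ge0 p_ge0 sup.
have sum_cc_ge0 : 0 <= \sum_i cc_slack a r X al i by apply: sumr_ge0.
have sum_price_ge0 : 0 <= \sum_i price_slack a d lam X al p 1 i by apply: sumr_ge0.
have cc0 : cc_slack a r X al i = 0.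
  by apply: (psumr_eq0P (P := xpredT) (fun i' _ => cc_ge0 i')) => //; lra.
have price0 : price_slack a d lam X al p 1 i = 0.
  by apply: (psumr_eq0P (P := xpredT) (fun i' _ => price_ge0 i')) => //; lra.
by have := agent_gap a r d lam X al p 1 i; rewrite cc0 price0 mul1r; lra.
Qed.

End StrongDuality.

Lemma set_argmin (R : realDomainType) (T : finType) (S : {set T}) (f : T -> R) :
  S != set0 -> exists2 i, i \in S & forall j, j \in S -> f i <= f j.
Proof.
case/set0Pn=> i0 S_i0.
by case: (@arg_minP _ _ _ i0 (mem S) f) => // i S_i min_i; exists i.
Qed.

Section AbelSummation.
Variables (R : realDomainType) (T : finType).
Implicit Types (mu e : T -> R) (S : {set T}) (m : R).

Definition upper_sum mu e S (i0 : T) := \sum_(i in S | mu i0 <= mu i) e i.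

Lemma upper_sum_shift mu e S m i0 : i0 \in [set i in S | m < mu i] ->
  upper_sum (fun i => mu i - m) e [set i in S | m < mu i] i0 = upper_sum mu e S i0.
Proof.
rewrite inE => /andP [_ m_lt]; apply: eq_bigl => i; rewrite inE lerD2r.
case: (i \in S) => //=; apply/andP/idP => [[] //|le_i0]; split=> //.
exact: lt_le_trans le_i0.
Qed.

Lemma weighted_sum_split mu e S m : {in S, forall i, m <= mu i} ->
  \sum_(i in S) mu i * e i =
  m * \sum_(i in S) e i + \sum_(i in [set i in S | m < mu i]) (mu i - m) * e i.
Proof.
move=> m_le.
have -> : \sum_(i in [set i in S | m < mu i]) (mu i - m) * e i =
          \sum_(i in S) (mu i - m) * e i.
  rewrite [RHS](bigID (fun i => m < mu i)) /= [X in _ = _ + X]big1 ?addr0.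
    by apply: eq_bigl => i; rewrite inE.
  move=> i /andP [S_i]; rewrite -leNgt => le_m.
  have -> : mu i = m by apply/le_anti; rewrite le_m m_le.
  by rewrite subrr mul0r.
by rewrite mulr_sumr -big_split /=; apply: eq_bigr => i _; ring.
Qed.

(* Abel summation by parts over the distinct values of [mu]: a positive
   combination of nonnegative upper sums. *)
Lemma abel_summation n mu e S : (#|S| <= n)%N -> {in S, forall i, 0 < mu i} ->
  {in S, forall i0, 0 <= upper_sum mu e S i0} ->
  0 <= \sum_(i in S) mu i * e i /\
  (\sum_(i in S) mu i * e i = 0 -> {in S, forall i0, upper_sum mu e S i0 = 0}).
Proof.
elim: n mu S => [|n IH] mu S card_S mu_gt0 up_ge0;
  (case: (eqVneq S set0) => [->|S_ne0];
   first by rewrite big_set0; split=> // _ i; rewrite in_set0).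
  by move: card_S; rewrite leqn0 cards_eq0 (negbTE S_ne0).
have [im S_im min_im] := set_argmin mu S_ne0; set m := mu im.
set S' := [set i in S | m < mu i].
have card_S' : (#|S'| <= n)%N.
  have S'_sub : S' \subset S :\ im.
    apply/subsetP => i; rewrite !inE => /andP [-> lt_i]; rewrite andbT.
    by apply: contraTneq lt_i => ->; rewrite ltxx.
  by have := subset_leq_card S'_sub; have := cardsD1 im S; rewrite S_im; lia.
have [||IH_ge0 IH_eq0] := IH (fun i => mu i - m) S' card_S'.
- by move=> i; rewrite inE subr_gt0 => /andP [].
- by move=> i0 S'_i0; rewrite upper_sum_shift //; apply: up_ge0; case/setIdP: S'_i0.
have sum_S : \sum_(i in S) e i = upper_sum mu e S im.
  by apply: eq_bigl => i; case S_i: (i \in S); rewrite //= min_im.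
have m_sum_ge0 : 0 <= m * \sum_(i in S) e i.
  by rewrite mulr_ge0 ?sum_S ?up_ge0 // ltW ?mu_gt0.
rewrite (weighted_sum_split e min_im) -/m -/S'; split; first exact: addr_ge0.
move=> sum0 i0 S_i0; have sum_S0 : \sum_(i in S) e i = 0.
  have /eqP : m * \sum_(i in S) e i = 0 by lra.
  by rewrite mulf_eq0 gt_eqF ?mu_gt0 // => /eqP.
case: (boolP (m < mu i0)) => [lt_i0|]; last rewrite -leNgt => le_i0.
  have S'_i0 : i0 \in S' by rewrite inE S_i0 lt_i0.
  by rewrite -(upper_sum_shift e S'_i0); apply: IH_eq0 => //; lra.
rewrite -[RHS]sum_S0; apply: eq_bigl => i; case S_i: (i \in S) => //=.
exact: le_trans le_i0 (min_im i S_i).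
Qed.

End AbelSummation.

Section Extensibility.
Variables (R : realFieldType) (A G C : finType).
Variables (a : A -> G -> C -> R) (r : A -> C -> R) (d : A -> G -> R) (lam : A -> R).
Local Notation jointly_optimal := (jointly_optimal a r d).

Lemma mem_upper i0 : i0 \in upper lam i0.
Proof. by rewrite inE. Qed.

Lemma jointly_optimal_set0 : jointly_optimal set0 (fun _ _ => 0).
Proof.
split=> [||Y _ _]; last by rewrite /delay !big_set0.
- by split=> // j; rewrite big1 ?ler01.
- by move=> i; rewrite in_set0.
Qed.

Lemma jointly_optimal_transfer U X Z : jointly_optimal U Z ->
  supply_respecting X -> {in U, forall i, CC a r i X} ->
  {in U, forall i, agent_delay d i X = agent_delay d i Z} -> jointly_optimal U X.
Proof.
move=> [_ _ Z_opt] X_sup X_cc same_delay; split=> // Y Y_sup Y_cc.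
by rewrite /delay (eq_bigr _ same_delay); apply: Z_opt.
Qed.

(* Adding the agents one by one in order of decreasing [lam]: extensibility
   keeps every agent's delay, hence the optimality for each upper set reached
   before, and the upper set containing the new agent is the whole set. *)
Lemma jointly_optimal_upper_sets : extensibility a r d -> forall S : {set A},
  exists Z, jointly_optimal S Z /\
    forall i0, upper lam i0 \subset S -> jointly_optimal (upper lam i0) Z.
Proof.
move=> ext S; move: {2}#|S| (erefl #|S|) => n; elim: n S => [|n IH] S card_S.
  have -> : S = set0 by apply/eqP; rewrite -cards_eq0 card_S.
  exists (fun _ _ => 0); split=> [|i0 /subsetP /(_ i0 (mem_upper i0))];
    by rewrite ?in_set0 //; exact: jointly_optimal_set0.
have [i S_i min_i] : exists2 i, i \in S & forall j, j \in S -> lam i <= lam j.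
  by apply: set_argmin; rewrite -card_gt0 card_S.
have [|Z [Z_opt Z_up]] := IH (S :\ i); first by move: card_S; rewrite (cardsD1 i) S_i => -[].
have [X [X_opt X_delay]] := ext _ _ Z_opt i (negbT (setD11 i S)).
rewrite setD1K // in X_opt; exists X; split=> // i0 up_sub.
have [up_i|up_ni] := boolP (i \in upper lam i0).
  suff -> : upper lam i0 = S by [].
  apply/eqP; rewrite eqEsubset up_sub; apply/subsetP => j S_j.
  by move: up_i; rewrite !inE => /le_trans; apply; exact: min_i.
have up_sub' : upper lam i0 \subset S :\ i.
  apply/subsetP => j up_j; rewrite in_setD1 (subsetP up_sub j up_j) andbT.
  by apply: contraNneq up_ni => <-.
case: X_opt => X_sup X_cc _; apply: (jointly_optimal_transfer (Z_up _ up_sub')) => //.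
- by move=> j /(subsetP up_sub); exact: X_cc.
- by move=> j /(subsetP up_sub'); exact: X_delay.
Qed.

End Extensibility.

Section Levels.
Variables (R : realFieldType) (A G C : finType).
Variables (a : A -> G -> C -> R) (r : A -> C -> R) (d : A -> G -> R) (lam : A -> R).
Hypothesis ext : extensibility a r d.
Hypothesis lam_gt0 : forall i, 0 < lam i.

Lemma LP_optimal_jointly_optimal_upper X : LP_optimal a r d lam X ->
  forall i0, jointly_optimal a r d (upper lam i0) X.
Proof.
move=> [[X_sup X_cc] X_opt].
have [Z [[Z_sup Z_cc _] Z_up]] := jointly_optimal_upper_sets lam ext [set: A].
have Z_upT i0 : jointly_optimal a r d (upper lam i0) Z by apply: Z_up; exact: subsetT.
pose e i := agent_delay d i X - agent_delay d i Z.
have up_sum i0 : upper_sum lam e [set: A] i0 =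
    delay d (upper lam i0) X - delay d (upper lam i0) Z.
  by rewrite /upper_sum sumrB /delay; congr (_ - _); apply: eq_bigl => i; rewrite !inE.
have [||weighted_ge0 weighted_eq0] :=
  abel_summation (mu := lam) (e := e) (leqnn #|[set: A]|).
- by move=> i _; exact: lam_gt0.
- by move=> i0 _; rewrite up_sum subr_ge0; case: (Z_upT i0) => _ _; apply.
have Z_feas : LP_feasible_sol a r Z by split=> // i; apply: Z_cc; rewrite in_setT.
have weighted0 : \sum_(i in [set: A]) lam i * e i = 0.
  apply/le_anti; rewrite weighted_ge0 andbT.
  have -> : \sum_(i in [set: A]) lam i * e i = LP_obj d lam X - LP_obj d lam Z.
    by rewrite /LP_obj -sumrB; apply: eq_big => [i|i _]; rewrite ?in_setT ?mulrBr.
  by rewrite subr_le0; exact: X_opt.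
move=> i0; have /eqP := weighted_eq0 weighted0 i0 (in_setT i0).
rewrite up_sum subr_eq0 => /eqP delay_eq.
split=> // Y Y_sup Y_cc; rewrite delay_eq.
by case: (Z_upT i0) => _ _; apply.
Qed.

Lemma LP_optimal_delay_upper X Y : LP_optimal a r d lam X -> LP_optimal a r d lam Y ->
  forall i0, delay d (upper lam i0) X = delay d (upper lam i0) Y.
Proof.
move=> X_opt Y_opt i0.
have [X_sup X_cc X_min] := LP_optimal_jointly_optimal_upper X_opt i0.
have [Y_sup Y_cc Y_min] := LP_optimal_jointly_optimal_upper Y_opt i0.
by apply/le_anti; rewrite X_min ?Y_min.
Qed.

(* The agents strictly above the level of [i0] form the upper set of the next
   level, if there is one. *)
Lemma LP_optimal_delay_level X Y : LP_optimal a r d lam X -> LP_optimal a r d lam Y ->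
  forall i0, delay d (level lam i0) X = delay d (level lam i0) Y.
Proof.
move=> X_opt Y_opt i0; set above := [set i | lam i0 < lam i].
have split_upper Z : delay d (upper lam i0) Z = delay d (level lam i0) Z + delay d above Z.
  rewrite /delay (bigID (fun i => lam i0 < lam i)) /= addrC.
  by congr (_ + _); apply: eq_bigl => i; rewrite !inE; case: ltgtP.
have above_eq : delay d above X = delay d above Y.
  have [->|above_ne0] := eqVneq above set0; first by rewrite /delay !big_set0.
  have [j above_j min_j] := set_argmin lam above_ne0.
  suff -> : above = upper lam j by exact: LP_optimal_delay_upper.
  apply/setP => i; rewrite !inE; apply/idP/idP => [lt_i|le_j].
    by apply: min_j; rewrite inE.
  by move: above_j; rewrite inE => /lt_le_trans; apply.
by have := LP_optimal_delay_upper X_opt Y_opt i0; rewrite !split_upper above_eq => /addIr.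
Qed.

Lemma pay_complementary X al p (S : {set A}) :
  LP_optimal a r d lam X -> DLP_optimal a r d lam al p ->
  pay S X p = \sum_(i in S) \sum_k r i k * al i k - \sum_(i in S) lam i * agent_delay d i X.
Proof.
move=> X_opt al_opt; rewrite /pay -sumrB; apply: eq_bigr => i _.
exact: complementary_slackness i X_opt al_opt.
Qed.

End Levels.

Unset Implicit Arguments.
Theorem lemma4p2 (R : realFieldType) (A G C : finType)
    (a : A -> G -> C -> R) (r : A -> C -> R) (d : A -> G -> R) (m : A -> R)
    (hr : forall i k, 0 <= r i k) (hd : forall i j, 0 <= d i j)
    (hm : forall i, 0 < m i)
    (hext : extensibility a r d)
    (lam : A -> R) (hlam : forall i, 0 < lam i)
    (hfeas : LP_feasible a r) :
  (* (1) *)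
  (forall X, LP_optimal a r d lam X ->
     forall i0 : A, jointly_optimal a r d (upper lam i0) X)
  /\ (forall X Y, LP_optimal a r d lam X -> LP_optimal a r d lam Y ->
     forall i0 : A, delay d (level lam i0) X = delay d (level lam i0) Y)
  (* (2) *)
  /\ (forall alpha p alpha' p',
        DLP_optimal a r d lam alpha p -> DLP_optimal a r d lam alpha' p' ->
        forall i0 : A,
        \sum_(i in level lam i0) \sum_(k : C) r i k * alpha i k =
        \sum_(i in level lam i0) \sum_(k : C) r i k * alpha' i k ->
        forall X, LP_optimal a r d lam X ->
          pay (level lam i0) X p = pay (level lam i0) X p')
  (* (3) *)
  /\ (forall X X' alpha p,
        LP_optimal a r d lam X -> LP_optimal a r d lam X' ->
        DLP_optimal a r d lam alpha p ->
        forall (i0 : A) (S : {set A}), S \subset level lam i0 ->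
        delay d S X <= delay d S X' ->
        pay S X' p <= pay S X p /\
        (delay d S X < delay d S X' <-> pay S X' p < pay S X p)).
Proof.
split; first exact: LP_optimal_jointly_optimal_upper.
split; first exact: LP_optimal_delay_level.
split.
  move=> al p al' p' al_opt al'_opt i0 same_value X X_opt.
  by rewrite (pay_complementary _ X_opt al_opt) (pay_complementary _ X_opt al'_opt) same_value.
move=> X X' al p X_opt X'_opt al_opt i0 S S_sub le_delay.
rewrite (pay_complementary _ X_opt al_opt) (pay_complementary _ X'_opt al_opt).
have level_delay Z : \sum_(i in S) lam i * agent_delay d i Z = lam i0 * delay d S Z.
  rewrite /delay mulr_sumr; apply: eq_bigr => i S_i.
  by have := subsetP S_sub i S_i; rewrite inE => /eqP ->.
rewrite !level_delay -(ltr_pM2l (hlam i0)).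
have := ler_wpM2l (ltW (hlam i0)) le_delay.
set u := lam i0 * delay d S X; set u' := lam i0 * delay d S X'.
by set v := \sum_(i in S) _ => le_u; split; [lra | split=> ?; lra].
Qed.
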